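(* Let $T$ be a tree, $T'$ a subtree of $T$, and let $D$ be a partial decision tree for $T$ which contains no query to a vertex of $T'$ but contains at least one query to a vertex of $N_T(V(T'))$. Let $Q$ be the set of all queries in $D$ to vertices of $N_T(V(T'))$. Then $D\langle Q\rangle$ is a path in $D$.
   Context: A query to a vertex $v$ of $T$ (with hidden target $x$) returns either that $v=x$ or the connected component of $T-v$ containing $x$. A decision tree for $T$ is defined recursively: a rooted tree whose root is a vertex $v$ of $T$ and whose root subtrees are decision trees for the connected components of $T-v$, one per component. A partial decision tree for $T$ is a subtree of some decision tree $D$ for $T$ that contains the root of $D$. $N_T(S)$ denotes the set of vertices outside $S$ adjacent to some vertex of $S$. For a rooted tree $D$ and a vertex set $Q$, $D\langle Q\rangle$ is the minimal connected subtree of $D$ containing $Q$. *)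

From Stdlib Require List.
From mathcomp Require Import all_boot.
Notation Forall2 := List.Forall2.
Set Implicit Arguments. Unset Strict Implicit. Unset Printing Implicit Defensive.

Section Defs.
Variable V : finType.

Definition is_tree (e : rel V) : Prop :=
  [/\ 0 < #|V|, symmetric e, irreflexive e,
      (forall x y, connect e x y) &
      (forall x p, uniq (x :: p) -> 2 <= size p -> path e x p -> ~~ e (last x p) x)].

Definition conn_in (e : rel V) (W : {set V}) : rel V :=
  connect (fun a b => [&& e a b, a \in W & b \in W]).

Definition connected_set (e : rel V) (W : {set V}) : Prop :=
  forall x y, x \in W -> y \in W -> conn_in e W x y.

Definition components (e : rel V) (W : {set V}) : {set {set V}} :=
  [set [set y in W | conn_in e W x y] | x in W].

Definition subtree_set (e : rel V) (S : {set V}) : Prop :=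
  S != set0 /\ connected_set e S.

Definition nbhd (e : rel V) (S : {set V}) : {set V} :=
  [set x | (x \notin S) && [exists y in S, e x y]].

Inductive dtree : Type := DNode of V & seq dtree.

Definition dlabel (t : dtree) : V := let: DNode v _ := t in v.

Fixpoint dlabels (t : dtree) : seq V :=
  let: DNode v cs := t in
  v :: (fix aux (l : seq dtree) := if l is c :: l' then dlabels c ++ aux l' else [::]) cs.

Fixpoint dedges (t : dtree) : seq (V * V) :=
  let: DNode v cs := t in
  [seq (v, dlabel c) | c <- cs] ++
  (fix aux (l : seq dtree) := if l is c :: l' then dedges c ++ aux l' else [::]) cs.

(** decision tree for the component W of (the current remainder of) T:
    root v in W, children = decision trees for the components of T[W] - v,
    one per component. *)
Inductive is_dtree (e : rel V) : {set V} -> dtree -> Prop :=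
| DT (W : {set V}) (v : V) (cs : seq dtree) (comps : seq {set V}) :
    v \in W ->
    perm_eq comps (enum (components e (W :\ v))) ->
    Forall2 (is_dtree e) comps cs ->
    is_dtree e W (DNode v cs).

(** [prune D D0]: D is a subtree of D0 containing the root of D0 *)
Inductive prune : dtree -> dtree -> Prop :=
| Pr (v : V) (cs' cs : seq dtree) (m : bitseq) :
    Forall2 prune cs' (mask m cs) -> prune (DNode v cs') (DNode v cs).

Definition partial_dtree (e : rel V) (D : dtree) : Prop :=
  exists D0, is_dtree e [set: V] D0 /\ prune D D0.

(** In a (partial) decision tree distinct nodes carry distinct labels, so we
    identify nodes of D with their labels; [dadj D] is the adjacency of D. *)
Definition dadj (D : dtree) : rel V :=
  fun x y => ((x, y) \in dedges D) || ((y, x) \in dedges D).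

Definition dnodes (D : dtree) : {set V} := [set x in dlabels D].

(** D<Q>: minimal connected subtree of D containing Q
    (intersection of all connected node sets of D containing Q) *)
Definition dhull (D : dtree) (Q : {set V}) : {set V} :=
  \bigcap_(X : {set V} | [&& Q \subset X, X \subset dnodes D &
        [forall x in X, forall y in X, conn_in (dadj D) X x y]]) X.

Definition is_dpath (D : dtree) (X : {set V}) : Prop :=
  exists x p, [/\ path (dadj D) x p, uniq (x :: p) & [set y in x :: p] = X].

End Defs.

From HB Require Import structures.
From mathcomp Require Import all_boot.

Set Implicit Arguments.
Unset Strict Implicit.
Unset Printing Implicit Defensive.

(* Since D never queries T', at every query v the vertices of T' lie in the
   current component W minus v, hence, T' being connected, in exactly one
   component of T[W] - v; a neighbour of T' lying in another component would
   pull T' into that component.  So all queries to N(T') sit on the single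
   descending chain of D that follows T'.  In a decision tree queries are
   pairwise distinct and a subtree of D is entered only through its root, so
   a connected set of nodes of D containing two nodes of a descending chain
   contains the whole chain segment between them: D<Q> is the segment from
   the first to the last query of Q. *)

Section SeqFacts.
Variables T U : eqType.

Lemma uniq_map_inj_in (g : T -> U) s : uniq (map g s) -> {in s &, injective g}.
Proof.
elim: s => //= x s IHs /andP[gx_notin uniq_gs] y z.
rewrite !inE => /predU1P[-> | ys] /predU1P[-> | zs] // gyz.
- by move: gx_notin; rewrite gyz map_f.
- by move: gx_notin; rewrite -gyz map_f.
- exact: IHs.
Qed.

Lemma uniq_flatten_map_eq (f : T -> seq U) s x y z :
  uniq (flatten (map f s)) -> x \in s -> y \in s -> z \in f x -> z \in f y -> x = y.
Proof.
elim: s => //= a s IHs; rewrite cat_uniq => /and3P[_ fa_disj uniq_fs].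
have fa_out w b : b \in s -> w \in f a -> w \in f b -> False.
  by move=> bs wa wb; case/hasP: fa_disj; exists w; first by apply/flatten_mapP; exists b.
rewrite !inE => /predU1P[-> | xs] /predU1P[-> | ys] // zx zy.
- by case: (fa_out z y).
- by case: (fa_out z x).
- exact: IHs.
Qed.

Lemma uniq_flatten_map (f : T -> seq U) s :
  uniq s -> {in s, forall x, uniq (f x)} ->
  (forall x y z, x \in s -> y \in s -> z \in f x -> z \in f y -> x = y) ->
  uniq (flatten (map f s)).
Proof.
elim: s => //= a s IHs /andP[a_notin uniq_s] uniq_f disj.
rewrite cat_uniq uniq_f ?mem_head //= IHs ?andbT //.
- apply/hasPn => z /flatten_mapP[y ys zy]; apply/negP => za.
  by move: a_notin; rewrite (disj a y z) ?mem_head ?inE ?ys ?orbT.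
- by move=> x xs; apply: uniq_f; rewrite inE xs orbT.
- by move=> x y z xs ys; apply: disj; rewrite inE ?xs ?ys orbT.
Qed.

End SeqFacts.

Lemma has_split_last (A : Type) (P : pred A) x s : P x ->
  exists p s2, [/\ s = p ++ s2, P (last x p) & ~~ has P s2].
Proof.
elim: s x => [|a s IHs] x Px; first by exists [::], [::].
case Pa: (P a).
  by have [p [s2 [-> Plast s2_off]]] := IHs a Pa; exists (a :: p), s2.
have [[|b p] [s2 [-> Plast s2_off]]] := IHs x Px.
  by exists [::], (a :: s2); rewrite /= Pa.
by exists [:: a, b & p], s2.
Qed.

Lemma has_split_extremes (A : Type) (P : pred A) s : has P s ->
  exists s1 x p s2, [/\ s = s1 ++ x :: p ++ s2, P x, P (last x p) & ~~ has P (s1 ++ s2)].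
Proof.
elim: s => //= a s IHs; case Pa: (P a) => /=.
  by move=> _; have [p [s2 [-> Plast s2_off]]] := has_split_last s Pa; exists [::], a, p, s2.
move=> /IHs[s1 [x [p [s2 [-> Px Plast off]]]]].
by exists (a :: s1), x, p, s2; rewrite /= Pa.
Qed.

Lemma path_cross (A : Type) (r : rel A) (P : pred A) x p :
  path r x p -> ~~ P x -> P (last x p) -> exists a b, [/\ r a b, ~~ P a & P b].
Proof.
elim: p x => [|b p IHp] x /=; first by move=> _ /negbTE->.
case/andP=> rxb rp Px Plast; case Pb: (P b); first by exists x, b; rewrite Pb.
by apply: IHp rp _ Plast; rewrite Pb.
Qed.

Lemma Forall2_mask (A B : Type) (R : A -> B -> Prop) m a b :
  Forall2 R a b -> Forall2 R (mask m a) (mask m b).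
Proof.
move=> Rab; elim: Rab m => [|x y a' b' Rxy _ IH] [|[] m] /=; try constructor; auto.
Qed.

Lemma Forall2_compose (A : Type) (B C : eqType)
    (P : A -> B -> Prop) (Q : B -> C -> Prop) (R : A -> C -> Prop) a b c :
  Forall2 P a b -> Forall2 Q b c ->
  (forall x y z, y \in b -> z \in c -> P x y -> Q y z -> R x z) -> Forall2 R a c.
Proof.
move=> Pab; elim: Pab c => [|x y a' b' Pxy _ IH] c Qbc;
  inversion_clear Qbc as [|? z ? c' Qyz Qbc'] => PQR; first by constructor.
constructor; first exact: (PQR x y z (mem_head _ _) (mem_head _ _) Pxy Qyz).
by apply: IH Qbc' _ => x' y' z' y'_b z'_c; apply: PQR; rewrite inE ?y'_b ?z'_c orbT.
Qed.

Lemma Forall2_graph (A : eqType) (B : Type) (g : A -> B) (P : A -> Prop) a b :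
  Forall2 (fun x y => y = g x /\ P x) a b -> b = map g a /\ {in a, forall x, P x}.
Proof.
elim=> [|x _ a' b' [-> Px] _ [-> IH]] //; split => // y.
by rewrite inE => /predU1P[-> | /IH].
Qed.

Section ConnIn.
Variable V : finType.
Implicit Types (r : rel V) (W : {set V}).

Lemma conn_in_sym r W : symmetric r -> symmetric (conn_in r W).
Proof.
move=> r_sym; apply: sym_connect_sym => x y.
by rewrite r_sym [(x \in W) && _]andbC.
Qed.

Lemma path_conn_in r x p : symmetric r -> path r x p ->
  {in x :: p &, forall a b, conn_in r [set y in x :: p] a b}.
Proof.
move=> r_sym r_p a b a_p b_p; set M := [set y in x :: p].
have M_all : all [in M] (x :: p) by apply/allP => y y_p; rewrite inE.
have M_p : path (fun c d => [&& r c d, c \in M & d \in M]) x p.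
  by apply: (sub_in_path _ M_all r_p) => c d c_M d_M /= ->; rewrite c_M d_M.
apply: connect_trans (_ : conn_in r M a x) (path_connect M_p b_p).
by rewrite conn_in_sym //; apply: (path_connect M_p a_p).
Qed.

End ConnIn.

Section DtreeEncoding.
Variable V : finType.

Fixpoint tree_of_dtree (t : dtree V) : GenTree.tree V :=
  let: DNode v cs := t in GenTree.Node 0 (GenTree.Leaf v :: map tree_of_dtree cs).

Fixpoint dtree_of_tree (x : GenTree.tree V) : option (dtree V) :=
  if x is GenTree.Node _ (GenTree.Leaf v :: xs) then Some (DNode v (pmap dtree_of_tree xs))
  else None.

Lemma tree_of_dtreeK : pcancel tree_of_dtree dtree_of_tree.
Proof.
rewrite /pcancel; fix IH 1; move=> -[v cs] /=; congr (Some (DNode v _)).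
by elim: cs => //= c cs ->; rewrite IH.
Qed.

End DtreeEncoding.

HB.instance Definition _ (V : finType) :=
  Equality.copy (dtree V) (pcan_type (@tree_of_dtreeK V)).

Section DtreeShape.
Variable V : finType.
Implicit Types (v : V) (t n m c D : dtree V) (cs l : seq (dtree V)).

Lemma dtree_mem_ind (P : dtree V -> Prop) :
  (forall v cs, (forall c, c \in cs -> P c) -> P (DNode v cs)) -> forall t, P t.
Proof.
move=> IH; fix F 1; move=> -[v cs]; apply: IH => c.
elim: cs => [|c' cs IHcs]; first by move=> c_nil; discriminate c_nil.
rewrite inE => /predU1P[-> | /IHcs //]; exact: F.
Qed.

Definition dchildren t : seq (dtree V) := let: DNode _ cs := t in cs.

Definition dchild t c : bool := c \in dchildren t.

Fixpoint dsubtrees t : seq (dtree V) :=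
  let: DNode _ cs := t in t :: flatten (map dsubtrees cs).

Lemma dsubtreesE v cs :
  dsubtrees (DNode v cs) = DNode v cs :: flatten (map dsubtrees cs).
Proof. by []. Qed.

Lemma dlabelsE v cs : dlabels (DNode v cs) = v :: flatten (map (@dlabels V) cs).
Proof. by rewrite /=; congr cons; elim: cs => //= c cs ->. Qed.

Lemma dedgesE v cs :
  dedges (DNode v cs) = [seq (v, dlabel c) | c <- cs] ++ flatten (map (@dedges V) cs).
Proof. by rewrite /=; congr cat; elim: cs => //= c cs ->. Qed.

Lemma dlabels_subtrees t : dlabels t = map (@dlabel V) (dsubtrees t).
Proof.
elim/dtree_mem_ind: t => v cs IH; rewrite dlabelsE /= map_flatten -map_comp.
by congr (_ :: flatten _); apply/eq_in_map => c /IH.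
Qed.

Lemma dedges_subtrees t :
  dedges t = [seq (dlabel m, dlabel c) | m <- dsubtrees t, c <- dchildren m].
Proof.
elim/dtree_mem_ind: t => v cs IH; rewrite dedgesE /=; congr (_ ++ _).
elim: cs IH => //= c cs IHcs IH.
by rewrite allpairs_cat IH ?mem_head // IHcs // => c' c'_cs; rewrite IH // inE c'_cs orbT.
Qed.

Lemma dsubtrees_self t : t \in dsubtrees t.
Proof. by case: t => v cs; apply: mem_head. Qed.

Lemma dchild_infix t c : dchild t c -> infix (dsubtrees c) (behead (dsubtrees t)).
Proof.
case: t => v cs; rewrite /dchild /= => /splitPr[cs1 cs2].
by rewrite map_cat flatten_cat /=; apply: infix_infix.
Qed.

Lemma dsubtrees_infix t n : n \in dsubtrees t -> infix (dsubtrees n) (dsubtrees t).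
Proof.
elim/dtree_mem_ind: t => v cs IH; rewrite dsubtreesE inE.
case/predU1P=> [-> | /flatten_mapP[c c_cs n_c]]; first exact: infix_refl.
apply: infix_trans (IH c c_cs n_c) (infix_trans (@dchild_infix (DNode v cs) c c_cs) _).
exact: infix_cons.
Qed.

Lemma dsubtrees_sub t n : n \in dsubtrees t -> {subset dsubtrees n <= dsubtrees t}.
Proof. by move/dsubtrees_infix/infixW/mem_subseq. Qed.

Lemma dchild_subtrees t c : dchild t c -> c \in dsubtrees t.
Proof.
by move/dchild_infix/infixW/mem_subseq/(_ c (dsubtrees_self c))/mem_behead.
Qed.

Lemma dchild_notin_subtrees t c : dchild t c -> t \notin dsubtrees c.
Proof.
move=> t_c; apply/negP => /dsubtrees_infix/size_infix.
move: (size_infix (dchild_infix t_c)); case: t {t_c} => v cs /= c_le t_le.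
by have := leq_trans t_le c_le; rewrite ltnn.
Qed.

Lemma dsubtrees_antisym t n : n \in dsubtrees t -> t \in dsubtrees n -> n = t.
Proof.
case: t => v cs; rewrite dsubtreesE inE => /predU1P[// | /flatten_mapP[c c_cs n_c] t_n].
have := @dchild_notin_subtrees (DNode v cs) c c_cs.
by rewrite (dsubtrees_sub n_c t_n).
Qed.

Lemma dsubtrees_parent t n m c :
  uniq (dsubtrees t) -> n \in dsubtrees t -> m \in dsubtrees t -> dchild m c ->
  c \in dsubtrees n -> c = n \/ m \in dsubtrees n.
Proof.
elim/dtree_mem_ind: t n m => v cs IH n m; rewrite dsubtreesE cons_uniq => /andP[_ uniq_F].
rewrite inE => /predU1P[-> m_t _ _ | /flatten_mapP[c1 c1_cs n_c1]].
  by right; rewrite dsubtreesE.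
have c1_uniq : uniq (dsubtrees c1).
  exact: infix_uniq (@dchild_infix (DNode v cs) c1 c1_cs) uniq_F.
rewrite inE => /predU1P[-> | /flatten_mapP[c2 c2_cs m_c2]] m_c c_n;
  have c_c1 := dsubtrees_sub n_c1 c_n.
  have c_cs : c \in cs := m_c.
  have c1_c := uniq_flatten_map_eq uniq_F c1_cs c_cs c_c1 (dsubtrees_self c).
  by left; apply: dsubtrees_antisym c_n _; rewrite -c1_c.
have c_c2 := dsubtrees_sub m_c2 (dchild_subtrees m_c).
have c2_c1 := uniq_flatten_map_eq uniq_F c2_cs c1_cs c_c2 c_c1.
rewrite c2_c1 in m_c2; exact: (IH c1 c1_cs n m c1_uniq n_c1 m_c2 m_c c_n).
Qed.

Lemma dchain_subtrees n l : path dchild n l -> {subset n :: l <= dsubtrees n}.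
Proof.
elim: l n => [|c l IHl] n /=; first by move=> _ m; rewrite inE => /eqP->; apply: dsubtrees_self.
case/andP=> n_c c_l m; rewrite inE => /predU1P[-> | /(IHl c c_l)]; first exact: dsubtrees_self.
exact: dsubtrees_sub (dchild_subtrees n_c) m.
Qed.

Lemma dchain_last n l m : path dchild n l -> m \in n :: l -> last n l \in dsubtrees m.
Proof.
move=> + m_nl; case/splitPl: m_nl => l1 l2 l1_m.
rewrite cat_path last_cat l1_m => /andP[_ m_l2].
by apply: (dchain_subtrees m_l2); apply: mem_last.
Qed.

Lemma dchain_uniq n l : path dchild n l -> uniq (n :: l).
Proof.
elim: l n => // c l IHl n /andP[n_c c_l]; rewrite cons_uniq (IHl c c_l) andbT.
apply: contraNN (dchild_notin_subtrees n_c) => n_cl.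
by apply: (dchain_subtrees c_l).
Qed.

Lemma dchain_dadj_path D n l : n \in dsubtrees D -> path dchild n l ->
  path (dadj D) (dlabel n) (map (@dlabel V) l).
Proof.
move=> n_D n_l; rewrite path_map.
have chain_D : all (mem (dsubtrees D)) (n :: l).
  by apply/allP => m /(dchain_subtrees n_l); apply: dsubtrees_sub.
apply: (sub_in_path _ chain_D n_l) => m c m_D _ m_c.
by rewrite /= /dadj dedges_subtrees (allpairs_f_dep (fun m c => (dlabel m, dlabel c)) m_D m_c).
Qed.

Lemma dadj_sym D : symmetric (dadj D).
Proof. by move=> a b; rewrite /dadj orbC. Qed.

End DtreeShape.

Arguments dchild {V} t c.

Section DtreeUniqueLabels.
Variables (V : finType) (D : dtree V).
Hypothesis D_uniq : uniq (dlabels D).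
Implicit Types (n m c : dtree V) (l p : seq (dtree V)).

Lemma dsubtrees_uniq : uniq (dsubtrees D).
Proof. by move: D_uniq; rewrite dlabels_subtrees => /map_uniq. Qed.

Lemma dlabel_inj : {in dsubtrees D &, injective (@dlabel V)}.
Proof. by apply: uniq_map_inj_in; rewrite -dlabels_subtrees. Qed.

Lemma mem_dlabels_subtree n m : n \in dsubtrees D -> m \in dsubtrees D ->
  (dlabel m \in dlabels n) = (m \in dsubtrees n).
Proof.
move=> n_D m_D; rewrite dlabels_subtrees; apply/mapP/idP => [[m' m'_n m_m'] | m_n].
  by rewrite (dlabel_inj m_D (dsubtrees_sub n_D m'_n) m_m').
by exists m.
Qed.

Lemma dadj_enter_subtree n a b : n \in dsubtrees D -> dadj D a b ->
  a \notin dlabels n -> b \in dlabels n -> b = dlabel n.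
Proof.
move=> n_D; have edgeP x y : (x, y) \in dedges D ->
    exists m c, [/\ m \in dsubtrees D, dchild m c, x = dlabel m & y = dlabel c].
  by rewrite dedges_subtrees => /allpairsPdep[m [c [m_D m_c [-> ->]]]]; exists m, c.
case/orP=> /edgeP[m [c [m_D m_c -> ->]]];
  have c_D := dsubtrees_sub m_D (dchild_subtrees m_c);
  rewrite !mem_dlabels_subtree // => a_n b_n.
  have [-> // | m_n] := dsubtrees_parent dsubtrees_uniq n_D m_D m_c b_n.
  by rewrite m_n in a_n.
by move: a_n; rewrite (dsubtrees_sub b_n (dchild_subtrees m_c)).
Qed.

Lemma conn_in_dsubtree_root n (X : {set V}) u w : n \in dsubtrees D ->
  u \notin dlabels n -> w \in dlabels n -> conn_in (dadj D) X u w -> dlabel n \in X.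
Proof.
move=> n_D u_n w_n /connectP[p walk w_last]; rewrite w_last in w_n.
have [a [b [/and3P[ab a_X b_X] a_n b_n]]] := path_cross walk u_n w_n.
by rewrite -(dadj_enter_subtree n_D ab a_n b_n).
Qed.

Lemma dchain_sub_conn_in n l (X : {set V}) : n \in dsubtrees D -> path dchild n l ->
  dlabel n \in X -> conn_in (dadj D) X (dlabel n) (dlabel (last n l)) ->
  {subset map (@dlabel V) (n :: l) <= X}.
Proof.
move=> n_D n_l n_X conn _ /mapP[m m_nl ->].
have m_n := dchain_subtrees n_l m_nl; have m_D := dsubtrees_sub n_D m_n.
move: m_nl; rewrite inE => /predU1P[-> // | m_l].
apply: (conn_in_dsubtree_root m_D _ _ conn); last first.
  by rewrite dlabels_subtrees map_f // dchain_last // inE m_l orbT.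
rewrite mem_dlabels_subtree //; apply/negP => n_m.
by move: (dchain_uniq n_l); rewrite /= -(dsubtrees_antisym m_n n_m) m_l.
Qed.

Lemma dhull_dchain n p (Q : {set V}) : n \in dsubtrees D -> path dchild n p ->
  dlabel n \in Q -> dlabel (last n p) \in Q ->
  Q \subset [set x in map (@dlabel V) (n :: p)] ->
  dhull D Q = [set x in map (@dlabel V) (n :: p)].
Proof.
move=> n_D n_p n_Q last_Q Q_M; apply/eqP; rewrite eqEsubset; apply/andP; split.
  apply: bigcap_inf; apply/and3P; split => //.
    apply/subsetP => x; rewrite /dnodes !in_set => /mapP[m m_np ->].
    by rewrite dlabels_subtrees map_f // (dsubtrees_sub n_D (dchain_subtrees n_p m_np)).
  apply/forall_inP => x x_M; apply/forall_inP => y y_M.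
  rewrite !in_set in x_M y_M.
  exact: (path_conn_in (@dadj_sym V D) (dchain_dadj_path n_D n_p) x_M y_M).
apply/subsetP => x x_M; apply/bigcapP => X /and3P[Q_X _ /forall_inP X_conn].
have n_X := subsetP Q_X _ n_Q; have last_X := subsetP Q_X _ last_Q.
have /forall_inP/(_ _ last_X) conn := X_conn _ n_X.
by rewrite in_set in x_M; apply: (dchain_sub_conn_in n_D n_p n_X conn x_M).
Qed.

Lemma is_dpath_dhull_dchain l (Q : {set V}) : path dchild D l -> Q != set0 ->
  Q \subset [set x in map (@dlabel V) (D :: l)] -> is_dpath D (dhull D Q).
Proof.
move=> D_l /set0Pn[q q_Q] Q_Dl; pose inQ m := dlabel m \in Q.
have: has inQ (D :: l).
  have := subsetP Q_Dl q q_Q; rewrite in_set => /mapP[m m_Dl q_m].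
  by apply/hasP; exists m; rewrite /inQ -?q_m.
case/has_split_extremes => s1 [n [p [s2 [Dl_eq n_Q last_Q off]]]].
have n_p : path dchild n p.
  apply: (@infix_sorted _ dchild (n :: p) (D :: l)) D_l.
  by rewrite Dl_eq -cat_cons infix_infix.
have n_D : n \in dsubtrees D.
  by apply: (dchain_subtrees D_l); rewrite Dl_eq mem_cat mem_head orbT.
have Q_np : Q \subset [set x in map (@dlabel V) (n :: p)].
  apply/subsetP => x x_Q; have := subsetP Q_Dl x x_Q; rewrite !in_set => /mapP[m m_Dl x_m].
  rewrite x_m map_f //; move: m_Dl; rewrite Dl_eq -cat_cons !mem_cat => /or3P[m_s1 | // | m_s2];
    by case/hasP: off; exists m; rewrite /inQ -?x_m ?mem_cat ?m_s1 ?m_s2 ?orbT.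
rewrite (dhull_dchain n_D n_p n_Q last_Q Q_np).
exists (dlabel n), (map (@dlabel V) p); split => //; first exact: dchain_dadj_path.
rewrite -map_cons (map_inj_in_uniq (sub_in2 _ dlabel_inj)) ?dchain_uniq // => m m_np.
exact: (dsubtrees_sub n_D (dchain_subtrees n_p m_np)).
Qed.

End DtreeUniqueLabels.

Section DecisionTreeSemantics.
Variables (V : finType) (e : rel V).
Hypothesis e_sym : symmetric e.
Implicit Types (W S C : {set V}) (t c : dtree V).

Definition comp_of W (x : V) : {set V} := [set y in W | conn_in e W x y].

Lemma comp_of_sub W x : comp_of W x \subset W.
Proof. by apply/subsetP => y; rewrite inE => /andP[]. Qed.

Lemma comp_of_eq W x y : y \in comp_of W x -> comp_of W y = comp_of W x.
Proof.
rewrite inE => /andP[_ xy]; have yx : conn_in e W y x by rewrite conn_in_sym.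
apply/setP => z; rewrite !inE; case: (z \in W) => //=.
by apply/idP/idP => [/(connect_trans xy) | /(connect_trans yx)].
Qed.

Lemma comp_of_meet W x y z :
  z \in comp_of W x -> z \in comp_of W y -> comp_of W x = comp_of W y.
Proof. by move=> /comp_of_eq <- /comp_of_eq <-. Qed.

Lemma components_comp_of W C y : C \in components e W -> y \in C -> C = comp_of W y.
Proof. by case/imsetP=> x _ -> /comp_of_eq ->. Qed.

Lemma nbhd_sub_comp_of S W x : connected_set e S -> S \subset W -> x \in W ->
  x \in nbhd e S -> S \subset comp_of W x.
Proof.
move=> S_conn S_W xW; rewrite inE => /andP[_ /existsP[s /andP[sS xs]]].
apply/subsetP => s' s'S; rewrite inE (subsetP S_W _ s'S) /=.
have x_s : conn_in e W x s by apply: connect1; rewrite /= xs xW (subsetP S_W _ sS).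
apply: connect_trans x_s (connect_sub _ (S_conn s s' sS s'S)) => a b /and3P[ab aS bS].
by apply: connect1; rewrite /= ab !(subsetP S_W).
Qed.

(* Each child is tagged
   with the component of T[W] - v containing its own root query, which avoids
   the positional pairing of children with components used by [is_dtree]. *)
Inductive pdtree : {set V} -> dtree V -> Prop :=
  PDNode W v cs :
    v \in W -> uniq [seq comp_of (W :\ v) (dlabel c) | c <- cs] ->
    (forall c, c \in cs -> pdtree (comp_of (W :\ v) (dlabel c)) c) ->
    pdtree W (DNode v cs).

Lemma pdtree_root W t : pdtree W t -> dlabel t \in W.
Proof. by case. Qed.

Lemma pdtree_labels W t : pdtree W t -> {subset dlabels t <= W}.
Proof.
elim=> {t} {}W v cs vW _ _ IH x; rewrite dlabelsE inE.
case/predU1P=> [-> // | /flatten_mapP[c c_cs /(IH c c_cs)]].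
by move/(subsetP (comp_of_sub _ _)); rewrite inE => /andP[].
Qed.

Lemma pdtree_uniq W t : pdtree W t -> uniq (dlabels t).
Proof.
elim=> {t} {}W v cs vW uniq_C cs_pd IH; rewrite dlabelsE cons_uniq.
have c_C c x : c \in cs -> x \in dlabels c -> x \in comp_of (W :\ v) (dlabel c).
  by move=> c_cs; apply: (pdtree_labels (cs_pd c c_cs)).
apply/andP; split.
  apply/negP => /flatten_mapP[c c_cs /(c_C c v c_cs)].
  by move/(subsetP (comp_of_sub _ _)); rewrite !inE eqxx.
apply: uniq_flatten_map (map_uniq uniq_C) IH _ => c1 c2 x c1_cs c2_cs x_c1 x_c2.
apply: (uniq_map_inj_in uniq_C c1_cs c2_cs).
exact: comp_of_meet (c_C _ _ c1_cs x_c1) (c_C _ _ c2_cs x_c2).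
Qed.

Lemma prune_pdtree D0 W D : is_dtree e W D0 -> prune D D0 -> pdtree W D.
Proof.
elim/dtree_mem_ind: D0 W D => v cs0 IH W D D0_dt D_pr.
inversion_clear D0_dt as [? ? ? comps vW comps_perm comps_dt].
inversion_clear D_pr as [? cs ? m cs_pr].
pose f c := comp_of (W :\ v) (dlabel c).
have [comps_f cs_pd] : mask m comps = map f cs /\ {in cs, forall c, pdtree (f c) c}.
  apply: Forall2_graph.
  apply: (Forall2_compose cs_pr (List.Forall2_flip (Forall2_mask m comps_dt))).
  move=> c c0 C c0_cs0 C_comps c_pr C_dt.
  have c_pd := IH c0 (mem_mask c0_cs0) C c C_dt c_pr.
  have C_f : C = f c.
    apply: components_comp_of (pdtree_root c_pd).
    by rewrite -mem_enum -(perm_mem comps_perm) (mem_mask C_comps).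
  by split; rewrite -?C_f.
apply: PDNode => //.
by rewrite -comps_f mask_uniq // (perm_uniq comps_perm) enum_uniq.
Qed.

Variable S : {set V}.
Hypotheses (S_conn : connected_set e S) (S_n0 : S != set0).

Lemma pdtree_nbhd_dchain W t :
  pdtree W t -> S \subset W -> {in dlabels t, forall x, x \notin S} ->
  exists2 l, path dchild t l &
    [set x in dlabels t | x \in nbhd e S] \subset [set x in map (@dlabel V) (t :: l)].
Proof.
elim=> {t} {}W v cs vW uniq_C cs_pd IH S_W S_off.
pose C c := comp_of (W :\ v) (dlabel c).
have S_Wv : S \subset W :\ v.
  apply/subsetP => s sS; rewrite !inE (subsetP S_W _ sS) andbT.
  by apply: contraNneq (S_off v _) => [<- // | ]; rewrite dlabelsE mem_head.
have c_off c : c \in cs -> {in dlabels c, forall x, x \notin S}.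
  move=> c_cs x x_c; apply: S_off; rewrite dlabelsE inE; apply/orP; right.
  by apply/flatten_mapP; exists c.
have nbhd_C c x : c \in cs -> x \in dlabels c -> x \in nbhd e S -> S \subset C c.
  move=> c_cs x_c xN; have x_C := pdtree_labels (cs_pd c c_cs) x_c.
  rewrite /C -(comp_of_eq x_C); apply: nbhd_sub_comp_of S_conn S_Wv _ xN.
  exact: (subsetP (comp_of_sub _ _) _ x_C).
have /set0Pn[s sS] := S_n0.
case: (boolP (has (fun c => S \subset C c) cs)) => [/hasP[c c_cs S_c] | /hasPn no_S_child].
  have [l c_l Q_l] := IH c c_cs S_c (c_off c c_cs).
  exists (c :: l); first by rewrite /= c_l andbT.
  apply/subsetP => x; rewrite in_set dlabelsE inE.
  case/andP=> [/predU1P[-> | /flatten_mapP[c' c'_cs x_c']] xN]; first by rewrite map_cons mem_head.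
  have c'_c : c' = c.
    apply: (uniq_map_inj_in uniq_C c'_cs c_cs).
    exact: comp_of_meet (subsetP (nbhd_C _ _ c'_cs x_c' xN) s sS) (subsetP S_c s sS).
  have x_Q : x \in [set x in dlabels c | x \in nbhd e S] by rewrite in_set -c'_c x_c' xN.
  have := subsetP Q_l x x_Q; rewrite in_set => x_cl.
  by rewrite map_cons inE x_cl orbT.
exists [::] => //; apply/subsetP => x; rewrite in_set dlabelsE inE.
case/andP=> [/predU1P[-> | /flatten_mapP[c c_cs x_c]] xN]; first by rewrite map_cons mem_head.
by case/negP: (no_S_child c c_cs); apply: nbhd_C xN.
Qed.

End DecisionTreeSemantics.

Theorem mainTheorem3 (V : finType) (e : rel V) (S : {set V}) (D : dtree V) :
  is_tree e ->
  subtree_set e S ->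
  partial_dtree e D ->
  (forall v, v \in dlabels D -> v \notin S) ->
  (exists v, (v \in dlabels D) && (v \in nbhd e S)) ->
  is_dpath D (dhull D [set v in dlabels D | v \in nbhd e S]).
Proof.
move=> [_ e_sym _ _ _] [S_n0 S_conn] [D0 [D0_dt D_pr]] D_off [q /andP[q_D q_N]].
have D_pd := prune_pdtree e_sym D0_dt D_pr.
have [l D_l Q_l] := pdtree_nbhd_dchain e_sym S_conn S_n0 D_pd (subsetT S) D_off.
apply: (is_dpath_dhull_dchain (pdtree_uniq e_sym D_pd) D_l _ Q_l).
by apply/set0Pn; exists q; rewrite inE q_D q_N.
Qed.
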